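(* Let $\mathcal{C}$, $C_0=\{c_0\}$, $f$ and $r$ be as in the context. Fix $\lambda\in[0,1]$, a discount factor $\gamma$, a random trip-detail variable $X$ with distribution $P$, real-valued measurable functions $u(X)$ and $\tilde u(X)$, a mode-selection policy $\pi_x(X,C)\in[0,1]$, a conditional distribution of the realized fare $p'\ge0$ given $X$, and a coupon-selection policy $\pi_c(\cdot\mid p',C)$ (a probability distribution on $C$ for every $p'\ge0$, $C\in\mathcal C$). Suppose real-valued functions $U$ on $\mathcal C$, $U_x(X,C)$, $U_c(p',C)$ (with all expectations finite) satisfy, for all $C\in\mathcal C$, $X$, $p'\ge0$, $$U(C)=(1-\lambda)\gamma\,U(f(C))+\lambda\,\mathbb{E}_X\big[U_x(X,C)\big],$$ $$U_x(X,C)=\big(1-\pi_x(X,C)\big)\gamma\,U(f(C))+\pi_x(X,C)\Big[u(X)+\mathbb{E}_{p'\mid X}\big[U_c(p',C)\big]\Big]+\tilde u(X),$$ $$U_c(p',C)=\sum_{c\in C}\pi_c(c\mid p',C)\big[r(p',c)+\gamma\,U(f(C,c))\big].$$ Define $V(C)=U(C)-U(C_0)$ and $V_c(p',C)=U_c(p',C)-U_c(p',C_0)$. Then for all $C\in\mathcal C$ and $p'\ge0$, $$V(C)=\gamma V(f(C))+\lambda\,\mathbb{E}_X\Big\{\pi_x(X,C)\Big[u(X)+\mathbb{E}_{p'\mid X}\big[V_c(p',C)\big]-\gamma V(f(C))\Big]-\pi_x(X,C_0)\,u(X)\Big\},$$ $$V_c(p',C)=\sum_{c\in C}\pi_c(c\mid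 p',C)\big[r(p',c)+\gamma V(f(C,c))\big],\qquad V(C_0)=0.$$
   Context: A coupon group is a triple $c=\langle v,T,n\rangle\in\mathbb{R}\times\mathbb{N}\times\mathbb{N}^+$ (face value $v$, remaining time to expiration $T$, number of coupons $n$). The default (zero-valued) group is $c_0=\langle 0,0,1\rangle$. A coupon set is a finite set of coupon groups containing $c_0$ in which no two groups have the same pair $(v,T)$; $\mathcal C$ is the set of all coupon sets and $C_0=\{c_0\}$. For a group, $f_c(\langle v,T,n\rangle)=\langle v,T-1,n\rangle$ if $v>0$, $n>0$ and $T\ge 1$, and $f_c(\langle v,T,n\rangle)=c_0$ otherwise. For $C\in\mathcal C$ and $c=\langle v,T,n\rangle\in C$, $f(C,c)=\{f_c(c'):c'\in C\setminus\{c\}\}\cup\{f_c(\langle v,T,n-1\rangle)\}$ and $f(C):=f(C,c_0)$; in particular $f(C_0)=f(C_0,c_0)=C_0$. The redemption value is $r(p',\langle v,T,n\rangle)=\min(v,p')$ for a realized fare $p'\ge 0$, so $r(p',c_0)=0$. $\mathbb{E}_X$ is expectation over $X\sim P$, $\mathbb{E}_{p'\mid X}$ over the realized fare given $X$. *)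

From HB Require Import structures.
From mathcomp Require Import all_boot all_order all_algebra.
From mathcomp Require Import finmap.
From mathcomp Require Import all_classical all_reals all_analysis.
Set Implicit Arguments.
Unset Strict Implicit.
Unset Printing Implicit Defensive.
Import Order.TTheory GRing.Theory Num.Theory.
Local Open Scope ring_scope.
Local Open Scope fset_scope.

Section Coupons.
Variable R : realType.

Definition coupon := (R * nat * nat)%type.

Definition cval (c : coupon) : R := c.1.1.
Definition ctime (c : coupon) : nat := c.1.2.
Definition cnum (c : coupon) : nat := c.2.

Definition c0 : coupon := (0, 0%N, 1%N).

Definition coupon_set (C : {fset coupon}) : Prop :=
  [/\ c0 \in C,
      (forall c, c \in C -> (0 < cnum c)%N) &
      (forall c c', c \in C -> c' \in C -> c.1 = c'.1 -> c = c')].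

Definition C0 : {fset coupon} := [fset c0].

Definition fc (c : coupon) : coupon :=
  if [&& 0 < cval c, (0 < cnum c)%N & (1 <= ctime c)%N]
  then (cval c, (ctime c).-1, cnum c) else c0.

Definition fCc (C : {fset coupon}) (c : coupon) : {fset coupon} :=
  [fset fc c' | c' in C `\ c] `|` [fset fc (cval c, ctime c, (cnum c).-1)].

Definition fC (C : {fset coupon}) : {fset coupon} := fCc C c0.

Definition redeem (p : R) (c : coupon) : R := Num.min (cval c) p.

End Coupons.

(* Since f(C_0) = C_0 and C_0 only offers the zero-valued group c_0, the
   Bellman equations at C_0 collapse to U_c(p', C_0) = gamma U(C_0) for every
   fare p' >= 0, hence (fares being almost surely nonnegative)
   U_x(X, C_0) = gamma U(C_0) + pi_x(X, C_0) u(X) + u~(X).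
   Subtracting these equations from the ones at C, the terms u~(X) cancel
   and the (1 - lambda) gamma and lambda gamma multiples of V(f(C)) recombine
   into a single gamma V(f(C)); the probabilities pi_c(. | p', C) summing to
   one turn gamma U(C_0) into the shift of every U(f(C, c)). *)
From HB Require Import structures.
From mathcomp Require Import all_boot all_order all_algebra.
From mathcomp Require Import finmap.
From mathcomp Require Import ring.
From mathcomp Require Import all_classical all_reals all_analysis.
Set Implicit Arguments.
Unset Strict Implicit.
Unset Printing Implicit Defensive.
Import Order.TTheory GRing.Theory Num.Theory.
Local Open Scope ring_scope.

Lemma fC_C0 (R : realType) : fC (C0 R) = C0 R.
Proof.
apply/fsetP => x; rewrite /fC /fCc /C0 fsetDv !inE /fc /= /cval /= ltxx /=.
apply/idP/idP => [/orP[/imfsetP[y]|//]|->]; first by rewrite inE.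
by rewrite orbT.
Qed.

Lemma coupon_set_C0 (R : realType) : coupon_set (C0 R).
Proof.
split; first by rewrite inE.
- by move=> c /fset1P ->.
- by move=> c c' /fset1P -> /fset1P ->.
Qed.

Lemma measure_ray_ge_eq1 (R : realType) (mu : {measure set R -> \bar R}) (a : R) :
  mu setT = 1%E -> mu `]-oo, a[%classic = 0%E -> mu `[a, +oo[%classic = 1%E.
Proof.
move=> mu1 mu_lt; rewrite -mu1 -(@itv_setU_setT _ _ true a) measureU //=.
- by rewrite mu_lt add0e.
- by rewrite -eq_opE; exact: disjoint_rays.
Qed.

Local Hint Resolve coupon_set_C0 : core.

Section RelativeBellman.
Variables (R : realType) (gam : R).
Variables (pic : coupon R -> R -> {fset coupon R} -> R).
Variables (U : {fset coupon R} -> R) (Uc : R -> {fset coupon R} -> R).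
Hypothesis pic_sum1 : forall p C, 0 <= p -> coupon_set C ->
  \sum_(c <- C) pic c p C = 1.
Hypothesis Uc_bellman : forall C p, coupon_set C -> 0 <= p ->
  Uc p C = \sum_(c <- C) pic c p C * (redeem p c + gam * U (fCc C c)).

Lemma Uc_C0 p : 0 <= p -> Uc p (C0 R) = gam * U (C0 R).
Proof.
move=> p0; have := pic_sum1 p0 (coupon_set_C0 R).
rewrite Uc_bellman // /C0 !big_seq_fset1 -/(C0 R) => ->.
by rewrite -/(fC _) fC_C0 /redeem /cval /= min_l // mul1r add0r.
Qed.

Lemma Vc_bellman C p : coupon_set C -> 0 <= p ->
  Uc p C - Uc p (C0 R)
  = \sum_(c <- C) pic c p C * (redeem p c + gam * (U (fCc C c) - U (C0 R))).
Proof.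
move=> cC p0; rewrite Uc_C0 // Uc_bellman //.
under [RHS]eq_bigr do rewrite mulrBr addrA mulrBr.
by rewrite sumrB -big_distrl /= pic_sum1 // mul1r.
Qed.

Variables (lam : R) (d : measure_display) (Tx : measurableType d).
Variables (P : probability Tx R) (K : R.-pker Tx ~> R).
Variables (u ut : Tx -> R) (pix : Tx -> {fset coupon R} -> R).
Variables (Ux : Tx -> {fset coupon R} -> R).
Hypothesis K_ge0 : forall x, K x `]-oo, 0%R[%classic = 0%E.
Hypothesis Ux_integrable : forall C, coupon_set C ->
  P.-integrable setT (EFin \o (fun x => Ux x C)).
Hypothesis Uc_integrable : forall C x, coupon_set C ->
  (K x).-integrable `[0%R, +oo[%classic (EFin \o (fun p => Uc p C)).
Hypothesis U_bellman : forall C, coupon_set C ->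
  U C = (1 - lam) * gam * U (fC C) + lam * Rintegral P setT (fun x => Ux x C).
Hypothesis Ux_bellman : forall C x, coupon_set C ->
  Ux x C = (1 - pix x C) * gam * U (fC C)
           + pix x C * (u x + Rintegral (K x) `[0%R, +oo[%classic (fun p => Uc p C))
           + ut x.

Lemma Rintegral_Uc_C0 x :
  Rintegral (K x) `[0%R, +oo[%classic (fun p => Uc p (C0 R)) = gam * U (C0 R).
Proof.
rewrite (@eq_Rintegral _ _ _ _ _ (fun _ => gam * U (C0 R))); last first.
  by move=> p; rewrite inE /= in_itv /= andbT => /Uc_C0.
by rewrite Rintegral_cst // (measure_ray_ge_eq1 (prob_kernel x) (K_ge0 x)) mulr1.
Qed.

Lemma Ux_sub_C0 x C : coupon_set C ->
  Ux x C - Ux x (C0 R)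
  = gam * (U (fC C) - U (C0 R))
    + (pix x C * (u x + Rintegral (K x) `[0%R, +oo[%classic (fun p => Uc p C - Uc p (C0 R))
                  - gam * (U (fC C) - U (C0 R)))
       - pix x (C0 R) * u x).
Proof.
move=> cC; rewrite RintegralB ?Uc_integrable // Rintegral_Uc_C0.
by rewrite (Ux_bellman x cC) Ux_bellman // Rintegral_Uc_C0 fC_C0; ring.
Qed.

Lemma V_bellman C : coupon_set C ->
  U C - U (C0 R)
  = gam * (U (fC C) - U (C0 R))
    + lam * Rintegral P setT (fun x =>
        pix x C * (u x + Rintegral (K x) `[0%R, +oo[%classic (fun p => Uc p C - Uc p (C0 R))
                   - gam * (U (fC C) - U (C0 R)))
        - pix x (C0 R) * u x).
Proof.
move=> cC; set k := gam * (U (fC C) - U (C0 R)).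
have k_integrable : P.-integrable setT (EFin \o (fun=> k)).
  exact: finite_measure_integrable_cst.
have UxC0_integrable := Ux_integrable (coupon_set_C0 R).
rewrite (@eq_Rintegral _ _ _ _ _ (fun x => Ux x C - (Ux x (C0 R) + k))); last first.
  by move=> x _; rewrite opprD addrA Ux_sub_C0 // /k [RHS]addrC addKr.
have P_setT : fine (P setT) = 1 by rewrite probability_setT.
rewrite RintegralB ?Ux_integrable //; last first.
  exact: (integrableD measurableT UxC0_integrable k_integrable).
rewrite (RintegralD measurableT UxC0_integrable k_integrable).
rewrite Rintegral_cst // P_setT mulr1.
rewrite [in LHS](U_bellman cC) (U_bellman (coupon_set_C0 R)) fC_C0 /k; ring.
Qed.

End RelativeBellman.

Theorem proposition1 (R : realType) (lam gam : R)
  (d : measure_display) (Tx : measurableType d) (P : probability Tx R)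
  (u ut : Tx -> R)
  (pix : Tx -> {fset coupon R} -> R)
  (K : R.-pker Tx ~> R)
  (pic : coupon R -> R -> {fset coupon R} -> R)
  (U : {fset coupon R} -> R)
  (Ux : Tx -> {fset coupon R} -> R)
  (Uc : R -> {fset coupon R} -> R) :
  0 <= lam <= 1 ->
  measurable_fun setT u -> measurable_fun setT ut ->
  (forall x C, coupon_set C -> 0 <= pix x C <= 1) ->
  (forall x, K x `]-oo, 0%R[%classic = 0%E) ->
  (forall p C, 0 <= p -> coupon_set C ->
     (forall c, c \in C -> 0 <= pic c p C) /\ \sum_(c <- C) pic c p C = 1) ->
  (forall C, coupon_set C ->
     P.-integrable setT (EFin \o (fun x => Ux x C))) ->
  (forall C x, coupon_set C ->
     (K x).-integrable `[0%R, +oo[%classic (EFin \o (fun p => Uc p C))) ->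
  (forall C, coupon_set C ->
     U C = (1 - lam) * gam * U (fC C) + lam * Rintegral P setT (fun x => Ux x C)) ->
  (forall C x, coupon_set C ->
     Ux x C = (1 - pix x C) * gam * U (fC C)
              + pix x C * (u x + Rintegral (K x) `[0%R, +oo[%classic (fun p => Uc p C))
              + ut x) ->
  (forall C p, coupon_set C -> 0 <= p ->
     Uc p C = \sum_(c <- C) pic c p C * (redeem p c + gam * U (fCc C c))) ->
  let V := fun C => U C - U (C0 R) in
  let Vc := fun p C => Uc p C - Uc p (C0 R) in
  forall C p, coupon_set C -> 0 <= p ->
    [/\ V C = gam * V (fC C)
              + lam * Rintegral P setT (fun x =>
                  pix x C * (u x + Rintegral (K x) `[0%R, +oo[%classic (fun q => Vc q C)
                             - gam * V (fC C))
                  - pix x (C0 R) * u x),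
        Vc p C = \sum_(c <- C) pic c p C * (redeem p c + gam * V (fCc C c)) &
        V (C0 R) = 0].
Proof.
move=> _ _ _ _ K_ge0 hpic Ux_int Uc_int U_eq Ux_eq Uc_eq V Vc C p cC p0.
have pic_sum1 p' C' p'0 cC' := (hpic p' C' p'0 cC').2.
split; last by rewrite /V subrr.
- exact: (V_bellman pic_sum1 Uc_eq K_ge0 Ux_int Uc_int U_eq Ux_eq).
- exact: (Vc_bellman pic_sum1 Uc_eq).
Qed.
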